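(* Let $N\ge 2$, let $T_N$ be the homogeneous tree in which every vertex has degree $N$, and fix a root $o$. Let $m>1$ and $(p,q)\in G_4=\{(p,q): p<0,\ q=m-1\}$. Then for every $\lambda>0$ there exists a weight $\mu$ on $T_N$ such that $$W_o(n)\asymp e^{\lambda n}\quad\text{for } n\ge 2,$$ and the inequality $\Delta_m u+u^p|\nabla u|^q\le 0$ on $T_N$ admits a nontrivial positive solution.
   Context: A weight on a graph $(V,E)$ is a symmetric function $\mu:V\times V\to[0,\infty)$ with $\mu_{xy}=\mu_{yx}>0$ if and only if $x\sim y$ (adjacent); $\mu(x)=\sum_{y\sim x}\mu_{xy}$. For $m>1$, $\Delta_m u(x)=\frac{1}{\mu(x)}\sum_{y\sim x}\mu_{xy}|u(y)-u(x)|^{m-2}(u(y)-u(x))$ and $|\nabla u(x)|=\big(\sum_{y\sim x}\frac{\mu_{xy}}{2\mu(x)}(u(y)-u(x))^2\big)^{1/2}$. $d$ is the graph distance, $B(o,n)=\{x: d(o,x)\le n\}$, $W_o(n)=\sum_{x\in B(o,n),\,y\in V,\,d(o,x)<d(o,y)}\mu_{xy}$. $f(n)\asymp g(n)$ for $n\ge2$ means there are constants $c,C>0$ with $c\,g(n)\le f(n)\le C\,g(n)$ for all $n\ge 2$. A nontrivial positive solution is a non-constant $u:V\to(0,\infty)$ with $\Delta_m u(x)+u(x)^p|\nabla u(x)|^q\le0$ for all $x\in V$. *)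

From HB Require Import structures.
From mathcomp Require Import all_boot all_order all_algebra.
From mathcomp Require Import all_classical all_reals all_analysis.
Set Implicit Arguments. Unset Strict Implicit. Unset Printing Implicit Defensive.
Import Order.TTheory GRing.Theory Num.Theory.
Local Open Scope ring_scope.

(* Vertices are words s : seq nat; the root has N children (letters < N),
   every other vertex has N-1 children (letters < N-1). *)

Definition nchild (N : nat) (s : seq nat) : nat :=
  if s is [::] then N else N.-1.

Definition is_vertex (N : nat) (s : seq nat) : bool :=
  match s with
  | [::] => true
  | a :: t => (a < N)%N && all (fun b => (b < N.-1)%N) t
  end.

Definition child (x y : seq nat) : bool :=
  (size y == (size x).+1) && (x == take (size x) y).

Definition adj (N : nat) (x y : seq nat) : bool :=
  [&& is_vertex N x, is_vertex N y & child x y || child y x].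

Definition nbrs (N : nat) (x : seq nat) : seq (seq nat) :=
  (if x is [::] then [::] else [:: take (size x).-1 x])
    ++ [seq rcons x i | i <- iota 0 (nchild N x)].

Definition root_o : seq nat := [::].

Definition dist_o (x : seq nat) : nat := size x.

Fixpoint level (N : nat) (k : nat) : seq (seq nat) :=
  match k with
  | 0 => [:: root_o]
  | k'.+1 => flatten [seq [seq rcons x i | i <- iota 0 (nchild N x)]
                     | x <- level N k']
  end.

Definition ball (N : nat) (n : nat) : seq (seq nat) :=
  flatten [seq level N k | k <- iota 0 n.+1].

Section Weights.
Variable R : realType.

Definition is_weight (N : nat) (mu : seq nat -> seq nat -> R) : Prop :=
  (forall x y, mu x y = mu y x) /\
  (forall x y, 0 <= mu x y) /\
  (forall x y, 0 < mu x y <-> adj N x y).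

Definition mu_v (N : nat) (mu : seq nat -> seq nat -> R) (x : seq nat) : R :=
  \sum_(y <- nbrs N x) mu x y.

(* W_o(n) = sum_{x in B(o,n), y in V, d(o,x) < d(o,y)} mu_xy ;
   only neighbours y of x contribute since mu_xy = 0 otherwise *)
Definition W_o (N : nat) (mu : seq nat -> seq nat -> R) (n : nat) : R :=
  \sum_(x <- ball N n) \sum_(y <- nbrs N x | (dist_o x < dist_o y)%N) mu x y.

Definition mLap (N : nat) (mu : seq nat -> seq nat -> R) (m : R)
    (u : seq nat -> R) (x : seq nat) : R :=
  (mu_v N mu x)^-1 *
  \sum_(y <- nbrs N x) mu x y * powR `|u y - u x| (m - 2) * (u y - u x).

Definition grad_norm (N : nat) (mu : seq nat -> seq nat -> R)
    (u : seq nat -> R) (x : seq nat) : R :=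
  Num.sqrt (\sum_(y <- nbrs N x) mu x y / (2 * mu_v N mu x) * (u y - u x) ^+ 2).

Definition nontrivial_pos_sol (N : nat) (mu : seq nat -> seq nat -> R)
    (m p q : R) (u : seq nat -> R) : Prop :=
  (forall x, is_vertex N x -> 0 < u x) /\
  (exists x y, [/\ is_vertex N x, is_vertex N y & u x != u y]) /\
  (forall x, is_vertex N x ->
     mLap N mu m u x + powR (u x) p * powR (grad_norm N mu u x) q <= 0).

End Weights.

(* Take the radial weight μ(xy) = e^{λk} / |S_{k+1}| on the edges between the
   spheres S_k and S_{k+1}: each sphere then sends total weight e^{λk} upwards, so
   W_o(n) is a geometric sum comparable to e^{λn}, and the total weight at a vertex
   of S_{k+1} grows from the parent edge to the child edges by the factor e^λ.
   The radial function u = c + s^{d(o,x)} with 0 < s < 1 and e^λ s^{m-1} > 1 then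
   satisfies Δ_m u = -ε (s^k (1-s))^{m-1} on S_{k+1} (and -(1-s)^{m-1} at o) for
   some ε ∈ (0,1], while |∇u| ≤ s^k (1-s).  Because q = m - 1, the reaction term
   u^p |∇u|^q is at most u^p (s^k (1-s))^{m-1}, and u ≥ c makes u^p ≤ ε once c is
   large, as p < 0. *)
From HB Require Import structures.
From mathcomp Require Import all_boot all_order all_algebra.
From mathcomp Require Import all_classical all_reals all_analysis.
From mathcomp Require Import ring lra.
Import Order.TTheory GRing.Theory Num.Theory.
Set Implicit Arguments. Unset Strict Implicit.
Local Open Scope ring_scope.

Section Tree.
Variable N : nat.

Lemma is_vertex_rcons x i :
  is_vertex N x -> (i < nchild N x)%N -> is_vertex N (rcons x i).
Proof.
case: x => [|a t] /=; first by move=> _ ->.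
by case/andP=> -> Ht Hi; rewrite all_rcons Hi Ht.
Qed.

Lemma is_vertex_take x n : is_vertex N x -> is_vertex N (take n x).
Proof.
case: x => [|a t] //; case: n => [|n] //= /andP[-> H].
by move: H; rewrite -{1}(cat_take_drop n t) all_cat => /andP[].
Qed.

Lemma child_rcons x i : child x (rcons x i).
Proof. by rewrite /child size_rcons eqxx -cats1 take_size_cat // eqxx. Qed.

Lemma child_parent x : x != [::] -> child (take (size x).-1 x) x.
Proof.
case: x => [|a t] // _.
by rewrite /child size_takel ?leq_pred // prednK // !eqxx.
Qed.

Lemma adjC x y : adj N x y = adj N y x.
Proof. by rewrite /adj andbCA orbC. Qed.

Lemma adj_parent x :
  is_vertex N x -> x != [::] -> adj N x (take (size x).-1 x).
Proof. by move=> Vx x0; rewrite /adj Vx is_vertex_take // child_parent // orbT. Qed.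

Lemma adj_rcons x i :
  is_vertex N x -> (i < nchild N x)%N -> adj N x (rcons x i).
Proof. by move=> Vx Hi; rewrite /adj Vx is_vertex_rcons // child_rcons. Qed.

Lemma mem_level k x : x \in level N k -> is_vertex N x /\ size x = k.
Proof.
elim: k x => [|k IH] x /=; first by rewrite inE => /eqP->.
case/flattenP=> _ /mapP[y /IH[Vy Sy] ->] /mapP[i].
rewrite mem_iota add0n => /andP[_ Hi] ->.
by rewrite is_vertex_rcons // size_rcons Sy.
Qed.

Lemma size_levelS k :
  size (level N k.+1) = (\sum_(x <- level N k) nchild N x)%N.
Proof.
rewrite /= size_flatten /shape -map_comp sumnE big_map.
by apply: eq_bigr => x _; rewrite /= size_map size_iota.
Qed.

End Tree.

Lemma sumr_const_seq (R : nmodType) (T : Type) (l : seq T) (c : R) :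
  \sum_(x <- l) c = c *+ size l.
Proof. by rewrite big_const_seq count_predT iter_addr_0. Qed.

Section RadialWeight.
Variable R : realType.
Variable N : nat.
Variable w : nat -> R.

Definition radial_weight (x y : seq nat) : R :=
  if adj N x y then w (minn (size x) (size y)) else 0.

Lemma radial_weight_is_weight :
  (forall k, 0 < w k) -> is_weight N radial_weight.
Proof.
move=> w_gt0; rewrite /radial_weight; split; [|split] => x y.
- by rewrite adjC minnC.
- by case: adj => //; exact/ltW.
- by case: adj; split; rewrite ?ltxx.
Qed.

Lemma sum_nbrsS (F : R -> nat -> R) x k :
  is_vertex N x -> size x = k.+1 ->
  \sum_(y <- nbrs N x) F (radial_weight x y) (size y)
    = F (w k) k + (N.-1)%:R * F (w k.+1) k.+2.
Proof.
case: x => [|a t] // Vx Sx.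
rewrite /nbrs big_cat big_seq1 big_map /radial_weight adj_parent //.
rewrite size_takel ?leq_pred // Sx (minn_idPr (leqnSn k)); congr (_ + _).
rewrite -[in RHS](size_iota 0 N.-1) mulr_natl -sumr_const_seq.
apply: eq_big_seq => i; rewrite mem_iota add0n => /andP[_ Hi].
by rewrite adj_rcons // size_rcons Sx (minn_idPl (leqnSn _)).
Qed.

Lemma sum_nbrs_root (F : R -> nat -> R) :
  \sum_(y <- nbrs N [::]) F (radial_weight [::] y) (size y) = N%:R * F (w 0) 1.
Proof.
rewrite /nbrs big_map -[in RHS](size_iota 0 N) mulr_natl -sumr_const_seq.
apply: eq_big_seq => i; rewrite mem_iota add0n => /andP[_ Hi].
by rewrite /radial_weight adj_rcons.
Qed.

Lemma sum_outer_nbrs x : is_vertex N x ->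
  \sum_(y <- nbrs N x | (dist_o x < dist_o y)%N) radial_weight x y
    = (nchild N x)%:R * w (size x).
Proof.
move=> Vx.
have children : \sum_(i <- iota 0 (nchild N x) | (dist_o x < dist_o (rcons x i))%N)
    radial_weight x (rcons x i) = (nchild N x)%:R * w (size x).
  rewrite (eq_bigl xpredT); last by move=> i; rewrite /dist_o size_rcons ltnSn.
  rewrite -[in RHS](size_iota 0 (nchild N x)) mulr_natl -sumr_const_seq.
  apply: eq_big_seq => i; rewrite mem_iota add0n => /andP[_ Hi].
  by rewrite /radial_weight adj_rcons // size_rcons (minn_idPl (leqnSn _)).
case: x Vx children => [|a t] Vx children; first by rewrite /nbrs /= big_map.
rewrite /nbrs big_cat big_map children big_cons big_nil.
by rewrite /dist_o size_takel ?leq_pred //= ltnNge leqnSn /= add0r.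
Qed.

End RadialWeight.

Section GeometricWeight.
Variable R : realType.
Variable N : nat.
Hypothesis N2 : (2 <= N)%N.
Variable Q : R.

Definition sphere_size (k : nat) : R := (size (level N k))%:R.

Lemma sphere_sizeS k : sphere_size k.+1 = \sum_(x <- level N k) (nchild N x)%:R.
Proof. by rewrite /sphere_size size_levelS natr_sum. Qed.

Lemma sphere_size1 : sphere_size 1 = N%:R.
Proof. by rewrite sphere_sizeS /= big_seq1. Qed.

Lemma sphere_sizeSS k : sphere_size k.+2 = (N.-1)%:R * sphere_size k.+1.
Proof.
rewrite sphere_sizeS /sphere_size mulr_natr -sumr_const_seq.
by apply: eq_big_seq => x /mem_level[_]; case: x.
Qed.

Lemma sphere_size_gt0 k : 0 < sphere_size k.
Proof.
case: k => [|k]; first by rewrite /sphere_size ltr01.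
elim: k => [|k IH]; first by rewrite sphere_size1 ltr0n; apply: leq_trans N2.
by rewrite sphere_sizeSS mulr_gt0 // ltr0n; case: N N2 => [|[|n]].
Qed.

Definition geom_weight (k : nat) : R := Q ^+ k / sphere_size k.+1.

Lemma W_o_geom_weight n :
  W_o N (radial_weight N geom_weight) n = \sum_(k <- iota 0 n.+1) Q ^+ k.
Proof.
rewrite /W_o /ball big_flatten big_map; apply: eq_bigr => k _.
rewrite (eq_big_seq (fun x => (nchild N x)%:R * geom_weight k)); last first.
  by move=> x /mem_level[Vx Sx]; rewrite sum_outer_nbrs // Sx.
by rewrite -mulr_suml -sphere_sizeS mulrC divfK // gt_eqF // sphere_size_gt0.
Qed.

Lemma geom_weight_gt0 k : 0 < Q -> 0 < geom_weight k.
Proof. by move=> Q0; rewrite divr_gt0 ?exprn_gt0 ?sphere_size_gt0. Qed.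

Lemma geom_weight_root : N%:R * geom_weight 0 = 1.
Proof.
by rewrite /geom_weight expr0 sphere_size1 mul1r divff // pnatr_eq0 -lt0n;
  apply: leq_trans N2.
Qed.

Lemma geom_weightS k : (N.-1)%:R * geom_weight k.+1 = Q * geom_weight k.
Proof.
rewrite /geom_weight sphere_sizeSS exprS.
have : (N.-1)%:R != 0 :> R by rewrite pnatr_eq0; case: N N2 => [|[|n]].
have : sphere_size k.+1 != 0 by rewrite gt_eqF // sphere_size_gt0.
by move=> ? ?; field; apply/andP.
Qed.

End GeometricWeight.

Lemma geometric_sum_bounds (R : realFieldType) (Q : R) n : 1 < Q ->
  Q ^+ n <= \sum_(k <- iota 0 n.+1) Q ^+ k <= Q / (Q - 1) * Q ^+ n.
Proof.
move=> Q1; have Q0 : 0 < Q by apply: lt_trans Q1.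
apply/andP; split.
  rewrite -addn1 iotaD big_cat /= big_seq1 lerDr.
  by apply: sumr_ge0 => i _; rewrite exprn_ge0 // ltW.
elim: n => [|n IH].
  by rewrite big_seq1 expr0 mulr1 ler_pdivlMr ?subr_gt0 //; lra.
rewrite -addn1 iotaD big_cat big_seq1 add0n.
apply: le_trans (lerD IH (lexx (Q ^+ n.+1))) _.
suff -> : Q / (Q - 1) * Q ^+ n + Q ^+ n.+1 = Q / (Q - 1) * Q ^+ n.+1 by [].
have : Q - 1 != 0 by rewrite gt_eqF // subr_gt0.
by rewrite exprS => ?; field.
Qed.

Section PowR.
Variables (R : realType) (m : R).
Hypothesis m1 : 1 < m.

Lemma powR_norm_mul d : 0 <= d -> powR `|d| (m - 2) * d = powR d (m - 1).
Proof.
move=> d0; have m0 : 0 < m - 1 by rewrite subr_gt0.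
rewrite ger0_norm // mulrC -(mulr_powRB1 d0 m0).
by congr (_ * powR _ _); ring.
Qed.

Lemma powR_norm_mulN d : 0 <= d -> powR `|- d| (m - 2) * (- d) = - powR d (m - 1).
Proof. by move=> d0; rewrite normrN mulrN powR_norm_mul. Qed.

End PowR.

Lemma absorb_le0 (R : realType) (a E g d r : R) :
  0 <= a -> 0 <= r -> 0 <= g -> a <= E -> g <= d ->
  - (E * powR d r) + a * powR g r <= 0.
Proof.
move=> a0 r0 g0 aE gd; rewrite addrC subr_le0; apply: ler_pM => //.
  exact: powR_ge0.
by apply: (ge0_ler_powR r0); rewrite ?nnegrE // (le_trans g0 gd).
Qed.

Section RadialProfile.
Variable R : realType.
Variable N : nat.
Hypothesis N2 : (2 <= N)%N.
Variables (m Q c s : R).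
Hypotheses (m1 : 1 < m) (Q0 : 0 < Q) (s0 : 0 < s) (s1 : s < 1).

Local Notation mu := (radial_weight N (geom_weight N Q)).

Definition profile (x : seq nat) : R := c + s ^+ size x.

Lemma profile_diffs k :
  (c + s ^+ k - (c + s ^+ k.+1) = s ^+ k * (1 - s)) *
  (c + s ^+ k.+2 - (c + s ^+ k.+1) = - (s * (s ^+ k * (1 - s)))).
Proof. by split; rewrite !exprS; ring. Qed.

Section Sphere.
Variables (x : seq nat) (k : nat).
Hypotheses (Vx : is_vertex N x) (Sx : size x = k.+1).

Let W := geom_weight N Q k.
Let d := s ^+ k * (1 - s).

Lemma mu_v_geom_weightS : mu_v N mu x = W * (1 + Q).
Proof.
rewrite /mu_v (sum_nbrsS _ (fun a _ => a) Vx Sx) geom_weightS //.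
by rewrite /W; ring.
Qed.

Lemma mLap_profileS :
  mLap N mu m profile x = - ((Q * powR s (m - 1) - 1) / (1 + Q) * powR d (m - 1)).
Proof.
have d0 : 0 <= d by rewrite mulr_ge0 ?exprn_ge0 ?subr_ge0 // ltW.
have down := powR_norm_mul m1 d0.
have up : powR `|- (s * d)| (m - 2) * - (s * d) = - (powR s (m - 1) * powR d (m - 1)).
  have sd0 : 0 <= s * d by rewrite mulr_ge0 // ltW.
  by rewrite (powR_norm_mulN m1 sd0) powRM // ltW.
rewrite /mLap mu_v_geom_weightS /profile Sx.
rewrite (sum_nbrsS _ (fun a j => a * powR `|c + s ^+ j - (c + s ^+ k.+1)| (m - 2)
                                       * (c + s ^+ j - (c + s ^+ k.+1))) Vx Sx).
rewrite !profile_diffs -/d -!(mulrA (geom_weight _ _ _)) down up.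
rewrite mulrA geom_weightS // -/W.
have : W != 0 by rewrite gt_eqF // geom_weight_gt0.
have : 1 + Q != 0 by rewrite gt_eqF // addr_gt0.
by move=> ? ?; field; apply/andP.
Qed.

Lemma grad_norm_profileS : grad_norm N mu profile x <= d.
Proof.
have d0 : 0 <= d by rewrite mulr_ge0 ?exprn_ge0 ?subr_ge0 // ltW.
have W0 : W != 0 by rewrite gt_eqF // geom_weight_gt0.
have Q10 : 0 < 1 + Q by rewrite addr_gt0.
rewrite /grad_norm mu_v_geom_weightS /profile Sx.
rewrite (sum_nbrsS _ (fun a j => a / (2 * (W * (1 + Q)))
                                  * (c + s ^+ j - (c + s ^+ k.+1)) ^+ 2) Vx Sx).
rewrite !profile_diffs -/d.
have -> : (N.-1)%:R * (geom_weight N Q k.+1 / (2 * (W * (1 + Q))) * (- (s * d)) ^+ 2)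
    = (N.-1)%:R * geom_weight N Q k.+1 / (2 * (W * (1 + Q))) * (- (s * d)) ^+ 2.
  by ring.
rewrite geom_weightS // -/W.
have -> : W / (2 * (W * (1 + Q))) * d ^+ 2 + Q * W / (2 * (W * (1 + Q))) * (- (s * d)) ^+ 2
    = d ^+ 2 * ((1 + Q * s ^+ 2) / (2 * (1 + Q))).
  by field; rewrite W0 gt_eqF.
rewrite -[X in _ <= X](ger0_norm d0) -sqrtr_sqr; apply: ler_wsqrtr.
rewrite ler_piMr ?sqr_ge0 // ler_pdivrMr ?mulr_gt0 // mul1r.
have : Q * s ^+ 2 <= Q by rewrite ler_piMr ?expr_le1 ?ltW.
by lra.
Qed.

End Sphere.

Lemma mu_v_geom_weight_root : mu_v N mu [::] = 1.
Proof. by rewrite /mu_v (sum_nbrs_root _ _ (fun a _ => a)) geom_weight_root. Qed.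

Lemma mLap_profile_root : mLap N mu m profile [::] = - powR (1 - s) (m - 1).
Proof.
rewrite /mLap mu_v_geom_weight_root invr1 mul1r /profile.
rewrite (sum_nbrs_root _ _ (fun a j => a * powR `|c + s ^+ j - (c + s ^+ 0)| (m - 2)
                                       * (c + s ^+ j - (c + s ^+ 0)))).
have -> : c + s ^+ 1 - (c + s ^+ 0) = - (1 - s) by rewrite expr1 expr0; ring.
have d0 : 0 <= 1 - s by rewrite subr_ge0 ltW.
rewrite -(mulrA (geom_weight _ _ _)) (powR_norm_mulN m1 d0).
by rewrite !mulrN mulrA geom_weight_root // mul1r.
Qed.

Lemma grad_norm_profile_root : grad_norm N mu profile [::] <= 1 - s.
Proof.
have d0 : 0 <= 1 - s by rewrite subr_ge0 ltW.
rewrite /grad_norm mu_v_geom_weight_root mulr1 /profile.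
rewrite (sum_nbrs_root _ _ (fun a j => a / 2 * (c + s ^+ j - (c + s ^+ 0)) ^+ 2)).
have -> : N%:R * (geom_weight N Q 0 / 2 * (c + s ^+ 1 - (c + s ^+ 0)) ^+ 2)
    = N%:R * geom_weight N Q 0 / 2 * (1 - s) ^+ 2 by rewrite expr1 expr0; ring.
rewrite geom_weight_root // mul1r -[X in _ <= X](ger0_norm d0) -sqrtr_sqr.
by apply: ler_wsqrtr; rewrite ler_piMl ?sqr_ge0 // invf_le1 ?ler1n.
Qed.

Lemma profile_supersolution p eps :
  eps <= 1 -> eps <= (Q * powR s (m - 1) - 1) / (1 + Q) ->
  (forall z, c <= z -> powR z p <= eps) ->
  forall x, is_vertex N x ->
  mLap N mu m profile x + powR (profile x) p * powR (grad_norm N mu profile x) (m - 1)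
    <= 0.
Proof.
move=> eps1 eps_gap small_c x Vx.
have up_le_eps : powR (profile x) p <= eps.
  by apply: small_c; rewrite lerDl exprn_ge0 // ltW.
have m0 : 0 <= m - 1 by rewrite subr_ge0 ltW.
have G0 : 0 <= grad_norm N mu profile x by exact: sqrtr_ge0.
case: x Vx up_le_eps G0 => [|a t] Vx up_le_eps G0.
  rewrite mLap_profile_root -[X in - X]mul1r.
  apply: (absorb_le0 (powR_ge0 _ _) m0 G0); first exact: le_trans up_le_eps eps1.
  exact: grad_norm_profile_root.
rewrite (mLap_profileS Vx (erefl (size (a :: t)))).
apply: (absorb_le0 (powR_ge0 _ _) m0 G0); first exact: le_trans up_le_eps eps_gap.
exact: grad_norm_profileS.
Qed.

End RadialProfile.

Lemma powR_eventually_le (R : realType) (p eps : R) : p < 0 -> 0 < eps ->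
  exists2 c : R, 0 < c & forall z, c <= z -> powR z p <= eps.
Proof.
move=> p0 eps0; exists (expR (ln eps / p)) => [|z cz]; first exact: expR_gt0.
have z0 : 0 < z by apply: lt_le_trans cz; exact: expR_gt0.
rewrite /powR gt_eqF // -[X in _ <= X](lnK (x := eps)) ?posrE // ler_expR.
have -> : ln eps = p * ln (expR (ln eps / p)) by rewrite expRK; field; rewrite lt_eqF.
by rewrite ler_nM2l // ler_ln ?posrE ?expR_gt0.
Qed.

Lemma exists_decay_rate (R : realType) (lam a : R) : 0 < lam -> 0 < a ->
  exists s : R, [/\ 0 < s, s < 1 & 1 < expR lam * powR s a <= expR lam].
Proof.
move=> lam0 a0; exists (expR (- (lam / (2 * a)))).
have -> : expR lam * powR (expR (- (lam / (2 * a)))) a = expR (lam / 2).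
  by rewrite -expRM -expRD; congr expR; field; rewrite gt_eqF.
split; first exact: expR_gt0.
  by rewrite expR_lt1 oppr_lt0 divr_gt0 ?mulr_gt0.
by rewrite expR_gt1 divr_gt0 //= ler_expR ler_pdivrMr //; lra.
Qed.

Theorem mainTheorem11 (R : realType) (N : nat) (m p q : R) :
  (2 <= N)%N -> 1 < m -> p < 0 -> q = m - 1 ->
  forall lambda : R, 0 < lambda ->
  exists mu : seq nat -> seq nat -> R,
    [/\ is_weight N mu,
        (exists c C : R, [/\ 0 < c, 0 < C &
           forall n : nat, (2 <= n)%N ->
             c * expR (lambda * n%:R) <= W_o N mu n <= C * expR (lambda * n%:R)]) &
        exists u : seq nat -> R, nontrivial_pos_sol N mu m p q u].
Proof.
move=> N2 m1 p0 -> lam lam0.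
have m0 : 0 < m - 1 by rewrite subr_gt0.
have [s [s0 s1 /andP[Qt_gt1 Qt_leQ]]] := exists_decay_rate lam0 m0.
set Q := expR lam in Qt_gt1 Qt_leQ *.
have Q1 : 1 < Q by rewrite expR_gt1.
have Q0 : 0 < Q by apply: lt_trans Q1.
set eps := (Q * powR s (m - 1) - 1) / (1 + Q).
have eps0 : 0 < eps by rewrite divr_gt0 ?subr_gt0 ?addr_gt0.
have eps1 : eps <= 1 by rewrite ler_pdivrMr ?addr_gt0 //; lra.
have [c c0 small_c] := powR_eventually_le p0 eps0.
exists (radial_weight N (geom_weight N Q)); split.
- by apply: radial_weight_is_weight => k; exact: geom_weight_gt0.
- exists 1, (Q / (Q - 1)); split; rewrite ?divr_gt0 ?subr_gt0 // => n _.
  by rewrite mul1r expRM_natr W_o_geom_weight // geometric_sum_bounds.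
- exists (profile c s); split; [|split].
  + by move=> x _; rewrite ltr_pwDl // exprn_ge0 // ltW.
  + exists [::], [:: 0%N]; split; first by [].
      by rewrite /= andbT; apply: leq_trans N2.
    by rewrite /profile /= expr0 expr1 (inj_eq (addrI c)) eq_sym lt_eqF.
  + by move=> x; apply: (profile_supersolution N2 m1 Q0 s0 s1 eps1 (lexx eps) small_c).
Qed.
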